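(* Let $\alpha>-1$, $d\in\widetilde{D}$, $p=(L_n^{(\alpha+1)})_{n\in\mathbb{N}_0}$, $q=(L_n^{(\alpha)})_{n\in\mathbb{N}_0}$, and let $T=E_{p,d}$ be regarded as an operator in $H(q)$ with domain $\mathcal{P}_c$. Suppose $f=\sum_kf_kq_k$ and $g=\sum_kg_kq_k$ in $H(q)$ are such that $(f,g)$ lies in the closure of the graph $G(T)$ in $H(q)\times H(q)$. Then: (a) there exists an array $(h_{n,u})_{n,u\in\mathbb{N}_0}$ of complex numbers such that (a1) $h_{n,u}=0$ for all $u>n$; (a2) $\lim_{n\to\infty}h_{n,u}=f_u$ for each $u\in\mathbb{N}_0$; (a3) $\lim_{n\to\infty}h_{n,n}d_n=0$; (a4) $\lim_{n\to\infty}\sum_{u=1}^nh_{n,u}(d_u-d_{u-1})=g_0-f_0d_0$; (b) for every $k\in\mathbb{N}$, $g_k=g_0-f_0d_0+f_kd_k-\sum_{u=1}^kf_u(d_u-d_{u-1})$.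
   Context: $\mathcal{P}_c$ is the space of polynomials in one real variable with complex coefficients. For $\beta>-1$, $L_n^{(\beta)}(x)=\sum_{k=0}^n\frac{(-1)^k}{k!}\binom{n+\beta}{n-k}x^k$ is the generalized Laguerre polynomial. For a sequence $Q=(Q_n)$ of polynomials with $\deg Q_n=n$, $H(Q)$ is the completion of $\mathcal{P}_c$ with respect to the inner product making $(Q_n)$ orthonormal; $g\in H(Q)$ is written $g=\sum_kg_kQ_k$, $(g_k)\in\ell_2$. $\widetilde{D}$ is the set of non-constant sequences of non-zero complex numbers. For a polynomial sequence $p$ and $d\in\widetilde{D}$, $E_{p,d}$ is the linear map on $\mathcal{P}_c$ with $E_{p,d}(p_n)=d_np_n$. *)

From HB Require Import structures.
From mathcomp Require Import all_boot all_order all_algebra.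
From mathcomp Require Import all_classical all_reals all_analysis.
From mathcomp Require Import complex.
Set Implicit Arguments. Unset Strict Implicit. Unset Printing Implicit Defensive.
Import Order.TTheory GRing.Theory Num.Theory numFieldNormedType.Exports.
Local Open Scope classical_set_scope.
Local Open Scope ring_scope.

Section LaguerreDefs.
Variable R : realType.
Local Notation C := R[i].

Definition cabs (z : C) : R := complex.Re `|z|.

Definition cvgC (u : nat -> C) (l : C) : Prop :=
  (fun n => cabs (u n - l)) @ \oo --> (0 : R).

Definition gbinom (x : C) (m : nat) : C :=
  (\prod_(j < m) (x - j%:R)) / (m`!)%:R.

Definition laguerre (beta : R) (n : nat) : {poly C} :=
  \sum_(k < n.+1)
     (((-1) ^+ k / (k`!)%:R) * gbinom (n%:R + (beta%:C)%C) (n - k)) *: 'X^k.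

Definition Dtilde (d : nat -> C) : Prop :=
  (forall n, d n != 0) /\ exists m n, d m != d n.

(* graph of E_{p,d} : P_c -> P_c, the linear map with E(p_n) = d_n p_n *)
Definition graphE (p : nat -> {poly C}) (d : nat -> C) (P TP : {poly C}) : Prop :=
  exists (N : nat) (c : nat -> C),
    P = \sum_(k < N) c k *: p k /\ TP = \sum_(k < N) (d k * c k) *: p k.

(* a : nat -> C is the (finitely supported) coefficient sequence of the
   polynomial P in the basis Q, i.e. the image of P in H(Q) ~ l2 *)
Definition coords (Q : nat -> {poly C}) (P : {poly C}) (a : nat -> C) : Prop :=
  exists N : nat, (forall k, (N <= k)%N -> a k = 0) /\
                  P = \sum_(k < N) a k *: Q k.

Definition l2norm2 (x : nat -> C) : \bar R :=
  (\sum_(0 <= k <oo) ((cabs (x k)) ^+ 2)%:E)%E.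

Definition in_l2 (x : nat -> C) : Prop := (l2norm2 x < +oo)%E.

(* (f, g) in the closure in H(Q) x H(Q) of the graph of E_{p,d} (domain P_c),
   elements of H(Q) being represented by their coefficient sequences in l2 *)
Definition in_graph_closure (p Q : nat -> {poly C}) (d : nat -> C)
    (f g : nat -> C) : Prop :=
  exists (P TP : nat -> {poly C}) (a b : nat -> nat -> C),
    (forall m, graphE p d (P m) (TP m)) /\
    (forall m, coords Q (P m) (a m)) /\
    (forall m, coords Q (TP m) (b m)) /\
    (fun m => l2norm2 (fun k => a m k - f k)) @ \oo --> 0%E /\
    (fun m => l2norm2 (fun k => b m k - g k)) @ \oo --> 0%E.

End LaguerreDefs.

(* Since L_n^(a+1) = L_0^(a) + ... + L_n^(a), the q-coordinates of
   P = sum_(k<N) c_k p_k are the tail sums a_j = sum_(j<=k<N) c_k, and those of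
   E_{p,d} P are b_j = sum_(j<=k<N) d_k c_k.  Hence
   b_k - b_(k+1) = d_k (a_k - a_(k+1)), and summation by parts gives on the graph
     b_k = b_0 - a_0 d_0 + a_k d_k - sum_(u=1)^k a_u (d_u - d_(u-1)).
   Convergence in H(q) forces convergence of every coordinate, which gives (b) in
   the limit.  The coordinates of the m-th approximant vanish from some N_m on,
   where the identity reads b_0 - a_0 d_0 = sum_(u=1)^n a_u (d_u - d_(u-1)); so
   the coordinates of the m(n)-th approximant, for an index m(n) -> oo growing
   slowly enough that N_(m(n)) <= n, form the array of (a). *)

From HB Require Import structures.
From mathcomp Require Import all_boot all_order all_algebra.
From mathcomp Require Import all_classical all_reals all_analysis.
From mathcomp Require Import complex.
From mathcomp Require Import ring.
Import Order.TTheory GRing.Theory Num.Theory numFieldNormedType.Exports.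
Set Implicit Arguments. Unset Strict Implicit. Unset Printing Implicit Defensive.
Local Open Scope classical_set_scope.
Local Open Scope ring_scope.
Local Open Scope complex_scope.

Definition tail_sum {V : nmodType} (N : nat) (c : nat -> V) (j : nat) : V :=
  \sum_(j <= k < N) c k.

Lemma tail_sum_ge (V : nmodType) N (c : nat -> V) j :
  (N <= j)%N -> tail_sum N c j = 0.
Proof. exact: big_geq. Qed.

Lemma tail_sum_subS (V : zmodType) N (c : nat -> V) j :
  tail_sum N c j - tail_sum N c j.+1 = c j *+ (j < N).
Proof.
rewrite /tail_sum; case: ltnP => [jN | Nj].
  by rewrite mulr1n big_ltn // addrK.
by rewrite mulr0n !big_geq ?subr0 // leqW.
Qed.

Lemma sum_scale_partial_sums (K : pzRingType) (V : lmodType K) (q : nat -> V)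
    N (c : nat -> K) :
  \sum_(k < N) c k *: \sum_(j < k.+1) q j = \sum_(j < N) tail_sum N c j *: q j.
Proof.
elim: N => [|N IH]; first by rewrite !big_ord0.
have tail_rec j : (j < N.+1)%N -> tail_sum N.+1 c j = tail_sum N c j + c N.
  by move=> jN; rewrite /tail_sum big_nat_recr.
rewrite big_ord_recr /= IH scaler_sumr.
transitivity (\sum_(j < N.+1) (tail_sum N c j *: q j + c N *: q j)).
  rewrite big_split /= [X in _ = X + _]big_ord_recr /=.
  by rewrite tail_sum_ge // scale0r addr0.
by apply: eq_bigr => j _; rewrite tail_rec // scalerDl.
Qed.

Lemma abel_summation (K : comPzRingType) (a b d : nat -> K) :
  (forall k, b k - b k.+1 = d k * (a k - a k.+1)) ->
  forall k, b k = b 0%N - a 0%N * d 0%N + a k * d k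
                  - \sum_(1 <= u < k.+1) a u * (d u - d u.-1).
Proof.
move=> step; elim=> [|k IH]; first by rewrite big_geq //; ring.
have -> : b k.+1 = b k - d k * (a k - a k.+1) by rewrite -step; ring.
by rewrite IH [in RHS]big_nat_recr //=; ring.
Qed.

Lemma sum_ord_widen0 (V : nmodType) (F : nat -> V) N M :
  (forall k, (N <= k)%N -> F k = 0) -> (N <= M)%N ->
  \sum_(k < N) F k = \sum_(k < M) F k.
Proof.
move=> F0 NM; rewrite -!(big_mkord xpredT) (big_cat_nat (leq0n N) NM) /=.
rewrite [X in _ + X]big_nat_cond [X in _ + X]big1 ?addr0 //.
by move=> k /andP[/andP[/F0]].
Qed.

Lemma lincomb_size_basis_eq0 (K : idomainType) (Q : nat -> {poly K}) :
  (forall k, size (Q k) = k.+1) ->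
  forall N (z : nat -> K), \sum_(k < N) z k *: Q k = 0 ->
  forall k, (k < N)%N -> z k = 0.
Proof.
move=> sizeQ; elim=> [|N IH] z sum_eq0 k // kN.
have zN : z N = 0.
  have /eqP := congr1 (fun P : {poly K} => P`_N) sum_eq0.
  rewrite coef_sum coef0 big_ord_recr /= big1 => [|j _]; last first.
    by rewrite coefZ nth_default ?mulr0 // sizeQ.
  rewrite add0r coefZ mulf_eq0 => /orP[/eqP // | QN_N].
  have : lead_coef (Q N) != 0 by rewrite lead_coef_eq0 -size_poly_eq0 sizeQ.
  by rewrite lead_coefE sizeQ QN_N.
move: kN; rewrite ltnS leq_eqVlt => /orP[/eqP -> // | kN].
by apply: (IH z) => //; rewrite big_ord_recr /= zN scale0r addr0 in sum_eq0.
Qed.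

Section Laguerre.
Variable R : realType.
Local Notation C := R[i].

Lemma gbinom0 (x : C) : gbinom x 0 = 1.
Proof. by rewrite /gbinom big_ord0 fact0 divr1. Qed.

Lemma gbinomSS (x : C) m : gbinom (x + 1) m.+1 = gbinom x m.+1 + gbinom x m.
Proof.
rewrite /gbinom big_ord_recl big_ord_recr /= subr0 factS natrM -natr1.
under eq_bigr do rewrite /bump /= add1n -natr1 opprD addrACA subrr addr0.
field.
by rewrite pnatr_eq0 -lt0n fact_gt0 natr1 pnatr_eq0.
Qed.

Lemma laguerreE (b : R) n : laguerre b n =
  \poly_(k < n.+1) ((-1) ^+ k / (k`!)%:R * gbinom (n%:R + b%:C) (n - k)).
Proof. by rewrite poly_def. Qed.

Lemma laguerreS (b : R) n :
  laguerre (b + 1) n.+1 = laguerre (b + 1) n + laguerre b n.+1.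
Proof.
set x : C := n%:R + (b + 1)%:C.
have shift : (n.+1)%:R + b%:C = x by rewrite /x rmorphD rmorph1 -natr1; ring.
have shift1 : (n.+1)%:R + (b + 1)%:C = x + 1 by rewrite /x -natr1; ring.
apply/polyP => j; rewrite coefD !laguerreE !coef_poly.
case: (ltngtP j n.+1) => [jn | nj | ->].
- rewrite ltnS in jn; rewrite ltnS (leqW jn) (subSn jn) shift shift1 gbinomSS.
  by rewrite mulrDr addrC.
- by rewrite ltnNge nj add0r.
- by rewrite ltnSn subnn !gbinom0 add0r.
Qed.

Lemma laguerre_partial_sum (b : R) n :
  laguerre (b + 1) n = \sum_(k < n.+1) laguerre b k.
Proof.
elim: n => [|n IH]; last by rewrite big_ord_recr /= -IH laguerreS.
rewrite big_ord1; apply/polyP => j; rewrite !laguerreE !coef_poly.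
by case: j => [|j] //=; rewrite !gbinom0.
Qed.

Lemma size_laguerre (b : R) n : size (laguerre b n) = n.+1.
Proof.
by rewrite laguerreE size_poly_eq // subnn gbinom0 mulr1 mulf_neq0 ?signr_eq0.
Qed.

End Laguerre.

Section GraphCoordinates.
Variable R : realType.
Local Notation C := R[i].
Variable q : nat -> {poly C}.
Hypothesis size_q : forall k, size (q k) = k.+1.

Lemma coords_eq P a a' : coords q P a -> coords q P a' -> a =1 a'.
Proof.
move=> [N [a0 ->]] [N' [a'0 P_eq]] k.
pose M := maxn N N'.
have widen (z : nat -> C) L : (forall k, (L <= k)%N -> z k = 0) -> (L <= M)%N ->
    \sum_(k < L) z k *: q k = \sum_(k < M) z k *: q k.
  move=> z0 LM; rewrite (@sum_ord_widen0 _ (fun k => z k *: q k) L M) //.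
  by move=> j /z0 ->; rewrite scale0r.
have diff0 : \sum_(k < M) (a k - a' k) *: q k = 0.
  under eq_bigr do rewrite scalerBl.
  rewrite sumrB -(widen a N a0 (leq_maxl _ _)) P_eq.
  by rewrite -(widen a' N' a'0 (leq_maxr _ _)) subrr.
case: (ltnP k M) => [kM | Mk].
  apply/eqP; rewrite -subr_eq0; apply/eqP.
  exact: (lincomb_size_basis_eq0 size_q (z := fun k => a k - a' k) diff0).
by rewrite a0 ?a'0 // (leq_trans _ Mk) // ?leq_maxl ?leq_maxr.
Qed.

Lemma coords_partial_sums N (c : nat -> C) :
  coords q (\sum_(k < N) c k *: \sum_(j < k.+1) q j) (tail_sum N c).
Proof.
by exists N; split=> [j /tail_sum_ge | ]; last exact: sum_scale_partial_sums.
Qed.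

Lemma graphE_coords_abel (d : nat -> C) P TP a b :
  graphE (fun n => \sum_(j < n.+1) q j) d P TP ->
  coords q P a -> coords q TP b ->
  forall k, b k = b 0%N - a 0%N * d 0%N + a k * d k
                  - \sum_(1 <= u < k.+1) a u * (d u - d u.-1).
Proof.
move=> [N [c [-> ->]]] /coords_eq eq_a /coords_eq eq_b.
rewrite (funext (eq_a _ (coords_partial_sums N c))).
rewrite (funext (eq_b _ (coords_partial_sums N (fun k => d k * c k)))).
by apply: abel_summation => k; rewrite !tail_sum_subS mulrnAr.
Qed.

End GraphCoordinates.

Section ComplexConvergence.
Variable R : realType.
Local Notation C := R[i].

Lemma cabs_normr (z : C) : (cabs z)%:C = `|z|.
Proof. exact/RRe_real/normr_real. Qed.

Lemma cabs_ge0 (z : C) : 0 <= cabs z.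
Proof. by rewrite -ler0c cabs_normr. Qed.

(* [R[i]] is a normed module over itself only through the alias [R[i]^o]. *)
Lemma cvgCP (u : nat -> C) (l : C) :
  cvgC u l <-> (u : nat -> C^o) @ \oo --> (l : C^o).
Proof.
rewrite /cvgC; split=> [/cvgrPdist_lt cvg0 | /cvgrPdist_lt cvgl].
- apply/cvgrPdist_lt => e e_gt0.
  have e_real : (complex.Re e)%:C = e :> C by apply: RRe_real; apply: gtr0_real.
  have /cvg0 : 0 < complex.Re e by rewrite -ltcR e_real.
  apply: filterS => n; rewrite sub0r normrN ger0_norm ?cabs_ge0 //.
  by rewrite -ltcR cabs_normr e_real distrC.
- apply/cvgrPdist_lt => e e_gt0; have /cvgl : 0 < e%:C :> C by rewrite ltcR.
  apply: filterS => n.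
  by rewrite distrC -cabs_normr ltcR sub0r normrN ger0_norm ?cabs_ge0.
Qed.

Lemma l2norm2_ge_coord (x : nat -> C) (k : nat) :
  (((cabs (x k)) ^+ 2)%:E <= l2norm2 x)%E.
Proof.
have sq_ge0 j : (0 <= ((cabs (x j)) ^+ 2)%:E)%E by rewrite lee_fin sqr_ge0.
apply: le_trans (nneseries_lim_ge k.+1 (fun j _ _ => sq_ge0 j)).
by rewrite big_nat_recr //= leeDr // sume_ge0.
Qed.

Lemma cvg_l2_coord (x : nat -> nat -> C) (y : nat -> C) :
  l2norm2 (fun k => x m k - y k) @[m --> \oo] --> 0%E ->
  forall k, (fun m => x m k : C^o) @ \oo --> (y k : C^o).
Proof.
move=> cvg_x k; apply/cvgCP; rewrite /cvgC.
have /fine_cvgP[_ cvg_sq] : ((cabs (x m k - y k)) ^+ 2)%:E @[m --> \oo] --> 0%E.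
  apply: (squeeze_cvge _ (cvg_cst 0%E) cvg_x); apply: nearW => m.
  by rewrite lee_fin sqr_ge0 (l2norm2_ge_coord (fun j => x m j - y j)).
have cvg_sqrt := cvg_comp _ _ cvg_sq (@sqrt_continuous R 0).
rewrite sqrtr0 in cvg_sqrt; apply: cvg_trans cvg_sqrt.
apply: near_eq_cvg; apply: nearW => m /=.
by rewrite sqrtr_sqr ger0_norm ?cabs_ge0.
Qed.
End ComplexConvergence.

Lemma slowly_divergent_index (Nf : nat -> nat) :
  exists2 m : nat -> nat,
    m @ \oo --> \oo & \forall n \near \oo, (Nf (m n) <= n)%N.
Proof.
pose m n := (\max_(j < n.+1 | Nf j <= n) j)%N.
exists m => [P [M _ PM] | ].
  exists (maxn M (Nf M)) => // n /=; rewrite geq_max => /andP[Mn NfMn].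
  apply: PM; rewrite /= /m.
  have := @leq_bigmax_cond _ (fun j : 'I_n.+1 => (Nf j <= n)%N)
                           (fun j => nat_of_ord j) (inord M).
  by rewrite inordK ?ltnS //; apply.
exists (Nf 0%N) => // n /= Nf0n; rewrite /m (bigop.bigmax_eq_arg ord0) //.
by case: arg_maxnP.
Qed.

Section AbelLimits.
Variable R : realType.
Local Notation C := R[i].
Variables (d f g : nat -> C) (a b : nat -> nat -> C).
Hypothesis abel : forall m k,
  b m k = b m 0%N - a m 0%N * d 0%N + a m k * d k
          - \sum_(1 <= u < k.+1) a m u * (d u - d u.-1).
Hypothesis lim_a : forall k, (fun m => a m k : C^o) @ \oo --> (f k : C^o).
Hypothesis lim_b : forall k, (fun m => b m k : C^o) @ \oo --> (g k : C^o).

Let lim_b0 : (fun m => b m 0%N - a m 0%N * d 0%N : C^o) @ \oo -->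
             (g 0%N - f 0%N * d 0%N : C^o).
Proof. exact: cvgB (@lim_b 0%N) (cvgM (@lim_a 0%N) (cvg_cst _)). Qed.

Lemma abel_identity_lim k :
  g k = g 0%N - f 0%N * d 0%N + f k * d k
        - \sum_(1 <= u < k.+1) f u * (d u - d u.-1).
Proof.
apply: (cvg_unique _ (@lim_b k)); first exact: norm_hausdorff.
rewrite /= (eq_cvg _ _ (fun m => @abel m k)).
have lim_sum : (fun m => \sum_(1 <= u < k.+1) a m u * (d u - d u.-1) : C^o)
    @ \oo --> (\sum_(1 <= u < k.+1) f u * (d u - d u.-1) : C^o).
  apply: cvg_big => [|u _]; first exact: add_continuous.
  exact: cvgM (@lim_a u) (cvg_cst _).
exact: cvgB (cvgD lim_b0 (cvgM (@lim_a k) (cvg_cst _))) lim_sum.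
Qed.

Lemma abel_array_lim :
  (forall m, exists N, forall k, (N <= k)%N -> a m k = 0 /\ b m k = 0) ->
  exists h : nat -> nat -> C,
    (forall n u, (n < u)%N -> h n u = 0) /\
    (forall u, cvgC (fun n => h n u) (f u)) /\
    cvgC (fun n => h n n * d n) 0 /\
    cvgC (fun n => \sum_(1 <= u < n.+1) h n u * (d u - d u.-1))
         (g 0%N - f 0%N * d 0%N).
Proof.
move=> /choice[Nf supp].
have sum_abel m n : (Nf m <= n)%N ->
    \sum_(1 <= u < n.+1) a m u * (d u - d u.-1) = b m 0%N - a m 0%N * d 0%N.
  move=> Nfn; have := @abel m n; have [-> ->] := supp m n Nfn.
  by rewrite mul0r addr0 => /esym/eqP; rewrite subr_eq0 => /eqP.
have [mu mu_oo Nf_mu] := slowly_divergent_index Nf.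
exists (fun n u => if (u <= n)%N then a (mu n) u else 0).
split; [|split; [|split]].
- by move=> n u; rewrite ltnNge => /negbTE ->.
- move=> u; apply/cvgCP; apply: cvg_trans (cvg_comp _ _ mu_oo (@lim_a u)).
  by apply: near_eq_cvg; apply: filterS (nbhs_infty_ge u) => n /= ->.
- apply/cvgCP; apply: cvg_trans (cvg_cst (0 : C^o) (F := \oo)).
  apply: near_eq_cvg; apply: filterS Nf_mu => n Nfn /=; rewrite leqnn.
  by have [-> _] := supp _ _ Nfn; rewrite mul0r.
- apply/cvgCP; apply: cvg_trans (cvg_comp _ _ mu_oo lim_b0).
  apply: near_eq_cvg; apply: filterS Nf_mu => n Nfn /=.
  rewrite -(sum_abel _ _ Nfn).
  by apply: eq_big_nat => u /andP[_]; rewrite ltnS => ->.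
Qed.

End AbelLimits.

Theorem theorem6 (R : realType) (alpha : R) (d f g : nat -> R[i]) :
  -1 < alpha ->
  Dtilde d ->
  in_l2 f -> in_l2 g ->
  in_graph_closure (laguerre (alpha + 1)) (laguerre alpha) d f g ->
  (exists h : nat -> nat -> R[i],
      (forall n u, (n < u)%N -> h n u = 0) /\
      (forall u, cvgC (fun n => h n u) (f u)) /\
      cvgC (fun n => h n n * d n) 0 /\
      cvgC (fun n => \sum_(1 <= u < n.+1) h n u * (d u - d u.-1))
           (g 0%N - f 0%N * d 0%N)) /\
  (forall k : nat, (0 < k)%N ->
     g k = g 0%N - f 0%N * d 0%N + f k * d k
           - \sum_(1 <= u < k.+1) f u * (d u - d u.-1)).
Proof.
move=> _ _ _ _ [P [TP [a [b [graphP [coordsP [coordsTP [cvg_a cvg_b]]]]]]]].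
rewrite (funext (laguerre_partial_sum alpha)) in graphP.
have abel m :=
  graphE_coords_abel (size_laguerre alpha) (graphP m) (coordsP m) (coordsTP m).
have lim_a := cvg_l2_coord cvg_a; have lim_b := cvg_l2_coord cvg_b.
split; last by move=> k _; exact: abel_identity_lim abel lim_a lim_b k.
apply: abel_array_lim abel lim_a lim_b _ => m.
have [Na [a0 _]] := coordsP m; have [Nb [b0 _]] := coordsTP m.
by exists (maxn Na Nb) => k; rewrite geq_max => /andP[/a0 -> /b0 ->].
Qed.
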